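(* Let $\mathbf{Y}\sim\mathcal{MMN}_p(\boldsymbol{\xi},\mathbf{\Omega},\boldsymbol{\delta};H)$, let $\mathbf{A}$ be a full-rank $p\times h$ matrix with $h\le p$, and let $\mathbf{c}\in\mathbb{R}^h$. Then $\mathbf{T}=\mathbf{c}+\mathbf{A}^\top\mathbf{Y}\sim\mathcal{MMN}_h(\boldsymbol{\xi}_{\mathbf{T}},\mathbf{\Omega}_{\mathbf{T}},\boldsymbol{\delta}_{\mathbf{T}};H)$, where $\boldsymbol{\xi}_{\mathbf{T}}=\mathbf{c}+\mathbf{A}^\top\boldsymbol{\xi}$, $\mathbf{\Omega}_{\mathbf{T}}=\mathbf{A}^\top\mathbf{\Omega}\mathbf{A}$, and $\boldsymbol{\delta}_{\mathbf{T}}=\boldsymbol{\omega}_{\mathbf{T}}^{-1}\mathbf{A}^\top\boldsymbol{\omega}\boldsymbol{\delta}$ with $\boldsymbol{\omega}_{\mathbf{T}}=(\mathbf{\Omega}_{\mathbf{T}}\odot\mathbf{I}_h)^{1/2}$.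
   Context: For $d\ge1$, $\boldsymbol{\xi}\in\mathbb{R}^d$, a $d\times d$ symmetric positive definite $\mathbf{\Omega}$, put $\boldsymbol{\omega}=(\mathbf{\Omega}\odot\mathbf{I}_d)^{1/2}=\mathrm{diag}(\mathbf{\Omega}_{11}^{1/2},\dots,\mathbf{\Omega}_{dd}^{1/2})$ ($\odot$ = Hadamard product) and $\overline{\mathbf{\Omega}}=\boldsymbol{\omega}^{-1}\mathbf{\Omega}\boldsymbol{\omega}^{-1}$; let $\boldsymbol{\delta}\in\mathbb{R}^d$ with $\overline{\mathbf{\Omega}}-\boldsymbol{\delta}\boldsymbol{\delta}^\top$ positive definite. For a real random variable $U$ with CDF $H$ and $\mathbf{Z}\sim\mathcal{N}_d(\mathbf{0},\overline{\mathbf{\Omega}}-\boldsymbol{\delta}\boldsymbol{\delta}^\top)$ independent of $U$, the law of $\boldsymbol{\xi}+\boldsymbol{\omega}(\boldsymbol{\delta}U+\mathbf{Z})$ is denoted $\mathcal{MMN}_d(\boldsymbol{\xi},\mathbf{\Omega},\boldsymbol{\delta};H)$. In the claim $\boldsymbol{\omega}$ refers to $\mathbf{\Omega}$ (dimension $p$). *)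

From HB Require Import structures.
From mathcomp Require Import all_boot all_order all_algebra.
From mathcomp Require Import all_classical all_reals all_analysis.
Set Implicit Arguments. Unset Strict Implicit. Unset Printing Implicit Defensive.
Import Order.TTheory GRing.Theory Num.Theory.
Local Open Scope classical_set_scope.
Local Open Scope ring_scope.

Section MMN.
Variable R : realType.

(* omega = (Omega o I_d)^{1/2} = diag(Omega_11^{1/2}, ..., Omega_dd^{1/2}) *)
Definition omega_of d (Om : 'M[R]_d) : 'M[R]_d :=
  diag_mx (\row_i Num.sqrt (Om i i)).

Definition Ombar d (Om : 'M[R]_d) : 'M[R]_d :=
  invmx (omega_of Om) *m Om *m invmx (omega_of Om).

Definition posdef d (M : 'M[R]_d) : Prop :=
  forall x : 'cV[R]_d, x != 0 -> 0 < (x^T *m M *m x) 0 0.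

Definition sym_posdef d (M : 'M[R]_d) : Prop := M^T = M /\ posdef M.

Definition rvec_meas (dT : measure_display) (T : measurableType dT) d
  (X : T -> 'cV[R]_d) : Prop :=
  forall i : 'I_d, measurable_fun setT (fun w => X w i 0).

Definition rect_ev (dT : measure_display) (T : measurableType dT) d
  (X : T -> 'cV[R]_d) (B : 'I_d -> set R) : set T :=
  [set w | forall i, B i (X w i 0)].

(* equality of laws on R^d (agreement on the generating pi-system of
   measurable rectangles) *)
Definition law_eq (dT : measure_display) (T : measurableType dT)
  (P : probability T R) (dT' : measure_display) (T' : measurableType dT')
  (Q : probability T' R) d (X : T -> 'cV[R]_d) (Y : T' -> 'cV[R]_d) : Prop :=
  forall B : 'I_d -> set R, (forall i, measurable (B i)) ->
    P (rect_ev X B) = Q (rect_ev Y B).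

Definition indep_rv_rvec (dT : measure_display) (T : measurableType dT)
  (P : probability T R) (U : T -> R) d (Z : T -> 'cV[R]_d) : Prop :=
  forall (A : set R) (B : 'I_d -> set R), measurable A ->
    (forall i, measurable (B i)) ->
    P (U @^-1` A `&` rect_ev Z B) = (P (U @^-1` A) * P (rect_ev Z B))%E.

Definition has_cdf (dT : measure_display) (T : measurableType dT)
  (P : probability T R) (U : T -> R) (H : R -> R) : Prop :=
  forall s : R, P (U @^-1` `]-oo, s]) = (H s)%:E.

Definition is_normal (dT : measure_display) (T : measurableType dT)
  (P : probability T R) (X : T -> R) (m v : R) : Prop :=
  forall A : set R, measurable A -> P (X @^-1` A) = normal_prob m (Num.sqrt v) A.

(* Z ~ N_d(mu, S): every nonzero linear combination a^T Z is
   N(a^T mu, a^T S a)  (S positive definite in all uses) *)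
Definition is_gaussian (dT : measure_display) (T : measurableType dT)
  (P : probability T R) d (Z : T -> 'cV[R]_d) (mu : 'cV[R]_d) (S : 'M[R]_d)
  : Prop :=
  forall a : 'cV[R]_d, a != 0 ->
    is_normal P (fun w => (a^T *m Z w) 0 0) ((a^T *m mu) 0 0)
      ((a^T *m S *m a) 0 0).

Arguments law_eq {dT T} P {dT' T'} Q {d} X Y.

Definition is_MMN (dT : measure_display) (T : measurableType dT)
  (P : probability T R) d (Y : T -> 'cV[R]_d) (xi : 'cV[R]_d)
  (Om : 'M[R]_d) (delta : 'cV[R]_d) (H : R -> R) : Prop :=
  sym_posdef Om /\ posdef (Ombar Om - delta *m delta^T) /\ rvec_meas Y /\
  exists (dQ : measure_display) (TQ : measurableType dQ)
         (Q : probability TQ R) (U : TQ -> R) (Z : TQ -> 'cV[R]_d),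
    measurable_fun setT U /\ rvec_meas Z /\ has_cdf Q U H /\
    is_gaussian Q Z 0 (Ombar Om - delta *m delta^T) /\
    indep_rv_rvec Q U Z /\
    law_eq P Q Y (fun w => xi + omega_of Om *m (U w *: delta + Z w)).

End MMN.

From HB Require Import structures.
From mathcomp Require Import all_boot all_order all_algebra.
From mathcomp Require Import all_classical all_reals all_analysis.
From mathcomp Require Import measurable_realfun.
Set Implicit Arguments.
Unset Strict Implicit.
Unset Printing Implicit Defensive.
Import Order.TTheory GRing.Theory Num.Theory.
Local Open Scope classical_set_scope.
Local Open Scope ring_scope.

(** Put [M := omega_T^-1 A^T omega]. Then
  [c + A^T (xi + omega (delta U + Z)) = xi_T + omega_T (delta_T U + M Z)] with
  [delta_T = M delta], and [M Z] is centred Gaussian with covariance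
  [M (Omegabar - delta delta^T) M^T = Omegabar_T - delta_T delta_T^T], which is
  positive definite because [M^T = omega A omega_T^-1] is injective when [A] has
  full column rank.  Equality of laws and independence are only given on
  measurable rectangles; they pass through the affine map because measures
  agreeing on this pi-system agree on the sigma-algebra it generates. *)

Section RectSigma.
Variable R : realType.

Definition rect_cV d := 'cV[R]_d.
HB.instance Definition _ d := Choice.on (rect_cV d).
HB.instance Definition _ d := isPointed.Build (rect_cV d) 0.

Definition cV_rect d : set (set (rect_cV d)) :=
  [set S | exists B : 'I_d -> set R, (forall i, measurable (B i)) /\
     S = [set v : 'cV[R]_d | forall i, B i (v i 0)]].

Definition rect_measurableType d := g_sigma_algebraType (@cV_rect d).

Local Notation mcV d := (rect_measurableType d).

Lemma measurable_fun_rect (dT : measure_display) (T : measurableType dT) d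
    (X : T -> mcV d) :
  rvec_meas X -> measurable_fun setT X.
Proof.
move=> mX; apply: (measurability (f := X) (@cV_rect d)) => //.
move=> _ [_ [B [mB ->]] <-].
have -> : setT `&` X @^-1` [set v : 'cV[R]_d | forall i, B i (v i 0)] =
    \bigcap_(i in setT) (setT `&` (fun w => (X w : 'cV[R]_d) i 0) @^-1` B i).
  apply/seteqP; split => [w [_ /= XB] i _|w /= XB]; first by split.
  by split => // i; case: (XB i I).
by apply: fin_bigcap_measurable => // i _; exact: mX.
Qed.

Lemma measurable_coord d (i : 'I_d) :
  measurable_fun setT (fun v : mcV d => (v : 'cV[R]_d) i 0).
Proof.
move=> _ B mB; rewrite setTI; apply: sub_sigma_algebra.
exists (fun j => if j == i then B else setT); split; first by move=> j; case: ifP.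
apply/seteqP; split => [v /= Bv j|v /= /(_ i)]; last by rewrite eqxx.
by case: ifP => // /eqP ->.
Qed.

Lemma rvec_meas_mul (dT : measure_display) (T : measurableType dT) d h
    (M : 'M[R]_(h, d)) (X : T -> 'cV[R]_d) :
  rvec_meas X -> rvec_meas (fun w => M *m X w).
Proof.
move=> mX i; under eq_fun do rewrite mxE.
by apply: measurable_sum => j; exact: measurable_funM.
Qed.

Lemma rvec_meas_affine (dT : measure_display) (T : measurableType dT) d h
    (c : 'cV[R]_h) (M : 'M[R]_(h, d)) (X : T -> 'cV[R]_d) :
  rvec_meas X -> rvec_meas (fun w => c + M *m X w).
Proof.
move=> /(rvec_meas_mul M) mMX i; under eq_fun do rewrite mxE.
exact: measurable_funD.
Qed.

Lemma measurable_affine d h (c : 'cV[R]_h) (M : 'M[R]_(h, d)) :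
  measurable_fun setT (fun v : mcV d => (c + M *m (v : 'cV[R]_d) : mcV h)).
Proof. by apply/measurable_fun_rect/rvec_meas_affine; exact: measurable_coord. Qed.

Lemma measurable_affine_preimage_rect d h (c : 'cV[R]_h) (M : 'M[R]_(h, d))
    (B : 'I_h -> set R) :
  (forall i, measurable (B i)) ->
  measurable ((fun v : mcV d => c + M *m (v : 'cV[R]_d)) @^-1`
    [set v : 'cV[R]_h | forall i, B i (v i 0)]).
Proof.
move=> mB; rewrite -[X in measurable X]setTI.
by apply: measurable_affine => //; apply: sub_sigma_algebra; exists B.
Qed.

Lemma measure_rect_unique d (m1 m2 : {measure set (mcV d) -> \bar R}) :
  (m1 setT < +oo)%E ->
  (forall B : 'I_d -> set R, (forall i, measurable (B i)) ->
     m1 [set v : 'cV[R]_d | forall i, B i (v i 0)] =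
     m2 [set v : 'cV[R]_d | forall i, B i (v i 0)]) ->
  forall S, measurable S -> m1 S = m2 S.
Proof.
move=> m1oo m12 S mS.
apply: (@measure_unique _ _ (mcV d) (@cV_rect d) (fun _ => setT)) => //.
- move=> _ _ [B [mB ->]] [B' [mB' ->]].
  exists (fun i => B i `&` B' i); split; first by move=> i; exact: measurableI.
  apply/seteqP; split => v /=; first by move=> [vB vB'] i.
  by move=> vBB'; split => i; case: (vBB' i).
- by move=> _; exists (fun _ => setT); split => //; apply/seteqP.
- by rewrite bigcup_const.
- by move=> _ [B [mB ->]]; exact: m12.
Qed.

End RectSigma.

Local Notation mcV R d := (rect_measurableType R d).

Section Transport.
Variable R : realType.

Lemma law_eq_preimage (dT : measure_display) (T : measurableType dT)
    (P : probability T R) (dT' : measure_display) (T' : measurableType dT')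
    (Q : probability T' R) d (X : T -> 'cV[R]_d) (Y : T' -> 'cV[R]_d) :
  rvec_meas X -> rvec_meas Y -> law_eq P Q X Y ->
  forall S : set (mcV R d), measurable S -> P (X @^-1` S) = Q (Y @^-1` S).
Proof.
move=> /measurable_fun_rect mX /measurable_fun_rect mY XY.
apply: (@measure_rect_unique _ _ (pushforward P (X : T -> mcV R d))
  (pushforward Q (Y : T' -> mcV R d))).
  by rewrite -[_ setT]/(P (X @^-1` setT)) preimage_setT probability_setT ltry.
exact: XY.
Qed.

Lemma law_eq_affine (dT : measure_display) (T : measurableType dT)
    (P : probability T R) (dT' : measure_display) (T' : measurableType dT')
    (Q : probability T' R) d h (c : 'cV[R]_h) (M : 'M[R]_(h, d))
    (X : T -> 'cV[R]_d) (Y : T' -> 'cV[R]_d) :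
  rvec_meas X -> rvec_meas Y -> law_eq P Q X Y ->
  law_eq P Q (fun w => c + M *m X w) (fun w => c + M *m Y w).
Proof.
move=> mX mY XY B mB.
exact: (law_eq_preimage mX mY XY (measurable_affine_preimage_rect c M mB)).
Qed.

Lemma indep_rv_rvec_preimage (dT : measure_display) (T : measurableType dT)
    (Q : probability T R) (U : T -> R) d (Z : T -> 'cV[R]_d) :
  measurable_fun setT U -> rvec_meas Z -> indep_rv_rvec Q U Z ->
  forall (A : set R) (S : set (mcV R d)), measurable A -> measurable S ->
  Q (U @^-1` A `&` Z @^-1` S) = (Q (U @^-1` A) * Q (Z @^-1` S))%E.
Proof.
move=> mU /measurable_fun_rect mZ UZ A S mA mS.
have mUA : measurable (U @^-1` A) by rewrite -[U @^-1` A]setTI; exact: mU.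
have QA_ge0 : (0 <= fine (Q (U @^-1` A)))%R by apply/fine_ge0/measure_ge0.
have QAE : (fine (Q (U @^-1` A)))%:E = Q (U @^-1` A).
  by rewrite fineK // fin_num_measure.
(* Both sides are finite measures in [S]: the law of [Z] restricted to
   [U @^-1` A], and the law of [Z] scaled by [Q (U @^-1` A)]. *)
rewrite setIC -QAE.
apply: (@measure_rect_unique _ _ (pushforward (mrestr Q mUA) (Z : T -> mcV R d))
  (mscale (NngNum QA_ge0) (pushforward Q (Z : T -> mcV R d)))) => //.
  rewrite -[_ setT]/(Q (Z @^-1` setT `&` U @^-1` A)) preimage_setT setTI.
  by rewrite (le_lt_trans (probability_le1 _ _)) ?ltry.
move=> B mB; rewrite -[LHS]/(Q (rect_ev Z B `&` U @^-1` A)).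
rewrite -[RHS]/(_%:E * Q (rect_ev Z B))%E QAE setIC.
exact: UZ.
Qed.

Lemma indep_rv_rvec_mul (dT : measure_display) (T : measurableType dT)
    (Q : probability T R) (U : T -> R) d h (M : 'M[R]_(h, d))
    (Z : T -> 'cV[R]_d) :
  measurable_fun setT U -> rvec_meas Z -> indep_rv_rvec Q U Z ->
  indep_rv_rvec Q U (fun w => M *m Z w).
Proof.
move=> mU mZ UZ A B mA mB.
have -> : rect_ev (fun w => M *m Z w) B =
    Z @^-1` ((fun v : mcV R d => 0 + M *m (v : 'cV[R]_d)) @^-1`
      [set v : 'cV[R]_h | forall i, B i (v i 0)]).
  by apply/seteqP; split => w /=; rewrite add0r.
exact: (indep_rv_rvec_preimage mU mZ UZ mA (measurable_affine_preimage_rect 0 M mB)).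
Qed.

Lemma is_gaussian_mul (dT : measure_display) (T : measurableType dT)
    (Q : probability T R) d h (Z : T -> 'cV[R]_d) (mu : 'cV[R]_d)
    (S : 'M[R]_d) (M : 'M[R]_(h, d)) :
  (forall a : 'cV[R]_h, a != 0 -> M^T *m a != 0) ->
  is_gaussian Q Z mu S ->
  is_gaussian Q (fun w => M *m Z w) (M *m mu) (M *m S *m M^T).
Proof.
move=> MTinj gZ a a0; have := gZ _ (MTinj a a0).
have aMT n (N : 'M[R]_(d, n)) : (M^T *m a)^T *m N = a^T *m M *m N.
  by rewrite trmx_mul trmxK.
have -> : (fun w => ((M^T *m a)^T *m Z w) 0 0) = (fun w => (a^T *m (M *m Z w)) 0 0).
  by apply/funext => w; rewrite aMT mulmxA.
by rewrite !aMT !mulmxA.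
Qed.

End Transport.

Section PosDef.
Variable R : realType.

Lemma posdef_diag_gt0 d (M : 'M[R]_d) : posdef M -> forall i, 0 < M i i.
Proof.
move=> Mpd i; have := Mpd (delta_mx i 0).
rewrite trmx_delta -rowE -colE !mxE; apply.
apply/eqP => /matrixP /(_ i 0); rewrite !mxE !eqxx /= => /eqP.
by rewrite oner_eq0.
Qed.

Lemma tr_omega_of d (S : 'M[R]_d) : (omega_of S)^T = omega_of S.
Proof. exact: tr_diag_mx. Qed.

Lemma omega_of_unit d (Om : 'M[R]_d) : posdef Om -> omega_of Om \in unitmx.
Proof.
move=> /posdef_diag_gt0 Om_gt0; rewrite unitmxE det_diag unitfE.
by apply/prodf_neq0 => i _; rewrite mxE gt_eqF // sqrtr_gt0.
Qed.

Lemma posdef_congr d h (S : 'M[R]_d) (B : 'M[R]_(d, h)) :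
  posdef S -> (forall a : 'cV[R]_h, a != 0 -> B *m a != 0) ->
  posdef (B^T *m S *m B).
Proof.
by move=> Spd Binj a /Binj /Spd; rewrite trmx_mul !mulmxA.
Qed.

Lemma mulmx_eq0_full_rank d h (A : 'M[R]_(d, h)) : \rank A = h ->
  forall x : 'cV[R]_h, A *m x = 0 -> x = 0.
Proof.
move=> rA x Ax0.
have rAT : row_free A^T by rewrite /row_free mxrank_tr rA.
have : x^T *m A^T = 0 *m A^T by rewrite -trmx_mul Ax0 trmx0 mul0mx.
by move/(row_free_inj rAT)/(congr1 trmx); rewrite trmxK trmx0.
Qed.

End PosDef.

Section AffineMMN.
Variables (R : realType) (p h : nat) (Om : 'M[R]_p) (A : 'M[R]_(p, h)).
Hypotheses (Om_pd : posdef Om) (rankA : \rank A = h).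

Let w := omega_of Om.
Let OmT := A^T *m Om *m A.
Let wT := omega_of OmT.
Let M := invmx wT *m A^T *m w.

Lemma posdef_congr_rank : posdef OmT.
Proof.
apply: posdef_congr => // a; apply: contra => /eqP.
by move/(mulmx_eq0_full_rank rankA) ->.
Qed.

Lemma trmx_omega_mul : M^T = w *m A *m invmx wT.
Proof. by rewrite !trmx_mul trmxK trmx_inv !tr_omega_of mulmxA. Qed.

Lemma trmx_omega_mul_inj (a : 'cV[R]_h) : a != 0 -> M^T *m a != 0.
Proof.
apply: contra => /eqP MTa0; apply/eqP.
have wU := omega_of_unit Om_pd; have wTU := omega_of_unit posdef_congr_rank.
have : w *m (A *m (invmx wT *m a)) = 0.
  by rewrite !mulmxA -trmx_omega_mul MTa0.
move/(congr1 (mulmx (invmx w))); rewrite mulKmx // mulmx0.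
by move/(mulmx_eq0_full_rank rankA)/(congr1 (mulmx wT)); rewrite mulKVmx // mulmx0.
Qed.

Lemma Ombar_congr_sub (delta : 'cV[R]_p) :
  Ombar OmT - (M *m delta) *m (M *m delta)^T =
  M *m (Ombar Om - delta *m delta^T) *m M^T.
Proof.
have wU := omega_of_unit Om_pd.
rewrite mulmxBr mulmxBl trmx_mul -!mulmxA; congr (_ - _).
by rewrite trmx_omega_mul /Ombar /M -/w !mulmxA mulmxK // mulmxKV.
Qed.

Lemma affine_omega_mul (xi : 'cV[R]_p) (c : 'cV[R]_h) (delta z : 'cV[R]_p)
    (u : R) :
  c + A^T *m (xi + w *m (u *: delta + z)) =
  c + A^T *m xi + wT *m (u *: (M *m delta) + M *m z).
Proof.
have wTU := omega_of_unit posdef_congr_rank.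
rewrite scalemxAr -mulmxDr mulmxA /M !mulmxA mulmxV // mul1mx.
by rewrite mulmxDr -addrA -!mulmxA -!mulmxDr.
Qed.

End AffineMMN.

Theorem theorem4 (R : realType) (dT : measure_display) (T : measurableType dT)
  (P : probability T R) (p h : nat) (Y : T -> 'cV[R]_p) (xi : 'cV[R]_p)
  (Om : 'M[R]_p) (delta : 'cV[R]_p) (H : R -> R)
  (A : 'M[R]_(p, h)) (c : 'cV[R]_h) :
  (h <= p)%N -> \rank A = h ->
  is_MMN P Y xi Om delta H ->
  is_MMN P (fun w => c + A^T *m Y w) (c + A^T *m xi) (A^T *m Om *m A)
    (invmx (omega_of (A^T *m Om *m A)) *m A^T *m omega_of Om *m delta) H.
Proof.
move=> _ rankA [[OmS Om_pd] [S_pd [mY [dQ [TQ [Q [U [Z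
  [mU [mZ [UH [gZ [UZ YE]]]]]]]]]]]]].
set M := invmx (omega_of (A^T *m Om *m A)) *m A^T *m omega_of Om.
have MTinj := trmx_omega_mul_inj Om_pd rankA.
have mYrep : rvec_meas (fun w => xi + omega_of Om *m (U w *: delta + Z w)).
  apply: rvec_meas_affine => i; under eq_fun do rewrite !mxE.
  by apply: measurable_funD => //; apply: measurable_funM => //; exact: mZ.
split; first split.
- by rewrite !trmx_mul trmxK OmS mulmxA.
- exact: posdef_congr_rank.
split.
  rewrite Ombar_congr_sub // -[X in X *m _ *m _]trmxK; exact: posdef_congr.
split; first exact: rvec_meas_affine.
exists dQ, TQ, Q, U, (fun w => M *m Z w).
split; first exact: mU.
split; first exact: rvec_meas_mul.
split; first exact: UH.
split.
  rewrite Ombar_congr_sub // -(mulmx0 1 M).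
  exact: is_gaussian_mul.
split; first exact: indep_rv_rvec_mul.
under [X in law_eq _ _ _ X]eq_fun do rewrite -affine_omega_mul //.
exact: law_eq_affine.
Qed.
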